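(* Let $k$ be a positive integer. If an edge-colored graph $G$ of order $n$ satisfies $\delta^c(G)\ge n/2+64k+1$, then $G$ contains $k$ vertex-disjoint rainbow cycles.
   Context: An edge-colored graph is a finite simple graph $G$ with a map $C:E(G)\to\mathbb{N}$. The color degree $d^c(v)$ of a vertex $v$ is the number of distinct colors on edges incident to $v$; $\delta^c(G)=\min_{v\in V(G)} d^c(v)$. A subgraph is rainbow if all its edges have distinct colors. *)

From mathcomp Require Import all_boot.
Set Implicit Arguments. Unset Strict Implicit. Unset Printing Implicit Defensive.

(* A finite simple graph on vertex type T: symmetric irreflexive relation e.
   An edge-colouring: c : T -> T -> nat with c x y = c y x; only its values
   on edges matter. *)
Definition simple_graph (T : finType) (e : rel T) :=
  symmetric e /\ irreflexive e.

Definition edge_coloring (T : finType) (c : T -> T -> nat) :=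
  forall x y, c x y = c y x.

Definition color_degree (T : finType) (e : rel T) (c : T -> T -> nat) (v : T) : nat :=
  size (undup [seq c v u | u <- enum T & e v u]).

Definition cycle_colors (T : finType) (c : T -> T -> nat) (s : seq T) : seq nat :=
  [seq c p.1 p.2 | p <- zip s (rot 1 s)].

Definition is_graph_cycle (T : finType) (e : rel T) (s : seq T) : bool :=
  [&& 3 <= size s, uniq s & cycle e s].

Definition rainbow_cycle (T : finType) (e : rel T) (c : T -> T -> nat) (s : seq T) : bool :=
  is_graph_cycle e s && uniq (cycle_colors c s).

From mathcomp Require Import all_boot zify.
Set Implicit Arguments. Unset Strict Implicit. Unset Printing Implicit Defensive.

(* Rainbow triangles suffice.  By a theorem of H. Li, an edge-coloured graph on
   m vertices with 2 d^c(v) > m everywhere has a rainbow triangle; deleting the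
   3i vertices of i disjoint rainbow triangles lowers each colour degree by at
   most 3i, so 2 d^c(v) >= n + 3k already gives k disjoint rainbow triangles.

   Li's theorem: deleting an edge whose colour is repeated at both ends keeps all
   colour degrees, so we may assume every edge has a colour unique at one of its
   ends.  Orient zx from z when its colour is repeated at z.  Without rainbow
   triangles, z -> x forces z and x to have more than d(x) - d^c(x) common
   in-neighbours.  So if x has an out-arc, its in-neighbourhood is non-empty and
   each of its vertices has more than d(x) - d^c(x) in-neighbours inside it;
   counting the arcs there, x has more in-arcs than its at most 2 (d(x) - d^c(x))
   out-arcs.  As in- and out-degrees have the same sum, no colour is repeated at
   any vertex, and then any triangle, which exists by the degree condition, is
   rainbow. *)

Section CountUndup.
Variables (T : eqType) (s : seq T).

Lemma sum_undup_count (F : T -> nat) :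
  \sum_(x <- s) F x = \sum_(x <- undup s) count_mem x s * F x.
Proof.
rewrite -[LHS](perm_big _ (perm_count_undup s)) big_flatten big_map /=.
by apply: eq_bigr => x _; rewrite big_nseq iter_addn_0 mulnC.
Qed.

Lemma count_mem_undup_gt0 x : x \in undup s -> 0 < count_mem x s.
Proof. by rewrite mem_undup -has_pred1 has_count. Qed.

Lemma size_undup_count a :
  a \in s -> size (undup s) + count_mem a s <= (size s).+1.
Proof.
move=> sa; have ua : a \in undup s by rewrite mem_undup.
rewrite -[size s]sum1_size sum_undup_count -sum1_size.
rewrite !(bigD1_seq a ua) ?undup_uniq //= muln1 addnAC add1n addSn ltnS leq_add2l.
rewrite big_seq_cond [X in _ <= X]big_seq_cond; apply: leq_sum => x.
by case/andP=> /count_mem_undup_gt0; rewrite muln1.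
Qed.

Lemma size_undup_double :
  2 * size (undup s) <= size s + count (fun x => count_mem x s <= 1) s.
Proof.
rewrite -[size s]sum1_size -sum1_count [X in _ + X]big_mkcond -big_split /=.
rewrite sum_undup_count -[size (undup s)]sum1_size big_distrr /=.
rewrite big_seq [X in _ <= X]big_seq; apply: leq_sum => x /count_mem_undup_gt0.
by case: (count_mem x s) => [|[|n]].
Qed.

End CountUndup.

Section FinsetCounting.
Variable T : finType.

Lemma card_set_in_sum (X : {set T}) (P : pred T) : #|[set u in X | P u]| = \sum_(u in X) P u.
Proof.
rewrite -sum1_card big_mkcond [RHS]big_mkcond; apply: eq_bigr => u _.
by rewrite inE; case: (u \in X); case: (P u).
Qed.

Lemma card_set_sum (P : pred T) : #|[set y | P y]| = \sum_y P y.
Proof. by rewrite -sum1_card big_mkcond; apply: eq_bigr => y _; rewrite inE. Qed.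

Lemma leq_cards_addI (A B : {set T}) : #|A| + #|B| <= #|A :&: B| + #|T|.
Proof. by rewrite -cardsUI addnC leq_add2l max_card. Qed.

Lemma count_enum_cards (P : pred T) : count P (enum T) = #|[set x | P x]|.
Proof. by rewrite cardsE cardE -size_filter enumT. Qed.

End FinsetCounting.

Section Digraph.
Variables (T : finType) (r : rel T).

Lemma oriented_indegree_lt (X : {set T}) m :
  (forall u v, r u v -> ~~ r v u) -> X != set0 ->
  (forall z, z \in X -> m <= #|[set u in X | r u z]|) -> m.*2 < #|X|.
Proof.
move=> asym /set0Pn [z0 z0X] min_in.
set S := \sum_(z in X) \sum_(u in X) (r u z : nat).
have lower : #|X| * m <= S.
  rewrite -sum_nat_const; apply: leq_sum => z zX.
  by rewrite -card_set_in_sum; apply: min_in.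
have diag : #|X| = \sum_(z in X) \sum_(u in X) (u == z : nat).
  rewrite -sum1_card; apply: eq_bigr => z zX.
  by rewrite (bigD1 z) //= eqxx big1 // => u /andP [_ /negbTE ->].
have upper : S + S + #|X| <= #|X| * #|X|.
  rewrite {2}/S exchange_big {1}diag -sum_nat_const -!big_split.
  apply: leq_sum => z zX; rewrite -sum1_card -!big_split; apply: leq_sum => u uX /=.
  have [->|_] := eqVneq u z.
    by case rzz: (r z z); [have := asym _ _ rzz; rewrite rzz|].
  case ruz: (r u z); last by case: (r z u).
  by rewrite (negbTE (asym _ _ ruz)).
have : 0 < #|X| by apply/card_gt0P; exists z0.
nia.
Qed.

Lemma out_le_in_eq :
  (forall x, #|[set y | r x y]| <= #|[set y | r y x]|) ->
  forall x, #|[set y | r x y]| = #|[set y | r y x]|.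
Proof.
move=> out_le_in x; apply/eqP; rewrite eqn_leq out_le_in /= -subn_eq0.
have : \sum_x (#|[set y | r y x]| - #|[set y | r x y]|) == 0.
  rewrite sumnB // subn_eq0 eq_leq //.
  rewrite (eq_bigr _ (fun x _ => card_set_sum (r^~ x))).
  by rewrite (eq_bigr _ (fun x _ => card_set_sum (r x))) exchange_big.
by rewrite sum_nat_eq0 => /forallP /(_ x).
Qed.

End Digraph.

Section ColorClasses.
Variables (T : finType) (g : rel T) (c : T -> T -> nat).

Definition nbhd x := [set y | g x y].
Definition color_class x a := [set y | g x y & c x y == a].
Definition repeated x y := 1 < #|color_class x (c x y)|.

Definition colors x := [seq c x u | u <- enum T & g x u].

Lemma color_degreeE x : color_degree g c x = size (undup (colors x)).
Proof. by []. Qed.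

Lemma size_colors x : size (colors x) = #|nbhd x|.
Proof. by rewrite size_map size_filter count_enum_cards. Qed.

Lemma count_colors x a : count_mem a (colors x) = #|color_class x a|.
Proof.
rewrite count_map count_filter count_enum_cards.
by apply: eq_card => y; rewrite !inE andbC.
Qed.

Lemma color_degree_le_card_nbhd x : color_degree g c x <= #|nbhd x|.
Proof. by rewrite color_degreeE -size_colors size_undup. Qed.

Lemma color_degree_color_class x y :
  g x y -> color_degree g c x + #|color_class x (c x y)| <= #|nbhd x|.+1.
Proof.
move=> gxy; rewrite color_degreeE -count_colors -size_colors size_undup_count //.
by apply: map_f; rewrite mem_filter mem_enum gxy.
Qed.

Lemma repeatedP x y :
  g x y -> reflect (exists u, [/\ g x u, u != y & c x u = c x y]) (repeated x y).
Proof.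
move=> gxy; rewrite /repeated (cardsD1 y) inE gxy eqxx add1n ltnS.
apply: (iffP card_gt0P) => [[u]|[u [gxu uy cxu]]].
  by rewrite !inE => /and3P [uy gxu /eqP cxu]; exists u.
by exists u; rewrite !inE uy gxu cxu eqxx.
Qed.

Lemma repeated_same_color x y y' :
  g x y -> g x y' -> y != y' -> c x y = c x y' -> repeated x y.
Proof. by move=> gxy gxy' yy' cxy; apply/repeatedP => //; exists y'; rewrite eq_sym. Qed.

Lemma card_repeated x :
  #|[set y | g x y & repeated x y]| <= 2 * (#|nbhd x| - color_degree g c x).
Proof.
have := size_undup_double (colors x); rewrite size_colors.
have -> : count (fun a => count_mem a (colors x) <= 1) (colors x) =
          #|[set y | g x y & ~~ repeated x y]|.
  rewrite count_map count_filter count_enum_cards; apply: eq_card => y.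
  by rewrite !inE count_colors /repeated -leqNgt andbC.
have := cardsID [set y | repeated x y] (nbhd x).
have -> : nbhd x :&: [set y | repeated x y] = [set y | g x y & repeated x y].
  by apply/setP => y; rewrite !inE.
have -> : nbhd x :\: [set y | repeated x y] = [set y | g x y & ~~ repeated x y].
  by apply/setP => y; rewrite !inE andbC.
rewrite color_degreeE; lia.
Qed.

End ColorClasses.

Lemma edge_neq (T : finType) (g : rel T) x y : irreflexive g -> g x y -> x != y.
Proof. by move=> girr; apply: contraTneq => ->; rewrite girr. Qed.

Definition rainbow_triangle (T : finType) (g : rel T) (c : T -> T -> nat) x y z :=
  [&& g x y, g y z, g z x & uniq [:: c x y; c y z; c z x]].

Section OneSidedRepetition.
Variables (V : finType) (g : rel V) (c : V -> V -> nat).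
Hypotheses (csym : forall x y, c x y = c y x) (gsym : symmetric g) (girr : irreflexive g).
Hypothesis dense : forall v, #|V| < 2 * color_degree g c v.
Hypothesis one_sided : forall x y, g x y -> repeated g c x y -> ~~ repeated g c y x.

Let arc x y := g x y && repeated g c x y.

Section NoRainbowTriangle.
Hypothesis no_rainbow : forall x y z, ~~ rainbow_triangle g c x y z.

Lemma non_rainbow_corner x y z : g x y -> g y z -> g z x ->
  [\/ c x y = c x z, c y z = c y x | c z x = c z y].
Proof.
move=> gxy gyz gzx; have := no_rainbow x y z.
rewrite /rainbow_triangle gxy gyz gzx /= !inE !negb_or !andbT -!negb_or !negbK.
case/orP=> [/orP[]|] /eqP E.
- by apply: Or32; rewrite -E csym.
- by apply: Or31; rewrite E csym.
- by apply: Or33; rewrite -E csym.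
Qed.

(* A common neighbour y of z and x lies in the colour class of zx at z unless the
   monochromatic corner of the triangle zxy is y; a corner at x would make the
   colour of zx repeated at both ends. *)
Lemma common_in_arcs z x : arc z x ->
  (#|nbhd g x| - color_degree g c x).+1 <= #|[set u | arc u z] :&: [set u | arc u x]|.
Proof.
case/andP=> gzx rzx.
have sub : nbhd g z :&: nbhd g x \subset
           (color_class g c z (c z x) :\ x) :|: ([set u | arc u z] :&: [set u | arc u x]).
  apply/subsetP => y; rewrite !inE => /andP [gzy gxy].
  have gyz : g y z by rewrite gsym.
  case: (non_rainbow_corner gzx gxy gyz) => [czy | cxy | cyz].
  - by rewrite gzy -czy eqxx eq_sym (edge_neq girr).
  - have gxz : g x z by rewrite gsym.
    have := one_sided gzx rzx.
    by rewrite (repeated_same_color gxz gxy) // eq_sym (edge_neq girr).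
  - have gyx : g y x by rewrite gsym.
    have zx := edge_neq girr gzx; have xz : x != z by rewrite eq_sym.
    by rewrite /arc gyz gyx (repeated_same_color gyz gyx) ?(repeated_same_color gyx gyz) ?orbT.
have xz : x \in color_class g c z (c z x) by rewrite !inE gzx eqxx.
have := subset_leq_card sub; have := (leq_card_setU (color_class g c z (c z x) :\ x)
  ([set u | arc u z] :&: [set u | arc u x])).1.
have := cardsD1 x (color_class g c z (c z x)); rewrite xz add1n.
have := leq_cards_addI (nbhd g z) (nbhd g x).
have := color_degree_color_class c gzx; have := color_degree_le_card_nbhd g c x.
have := dense z; have := dense x.
lia.
Qed.

Lemma arc_asym u v : arc u v -> ~~ arc v u.
Proof. by case/andP=> guv ruv; rewrite /arc negb_and (one_sided guv ruv) orbT. Qed.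

Lemma card_out_lt_in x y : arc x y -> #|[set v | arc x v]| < #|[set u | arc u x]|.
Proof.
move=> axy; set e := #|nbhd g x| - color_degree g c x.
have in_x : [set u | arc u x] != set0.
  apply/set0Pn; have /card_gt0P [u] := leq_ltn_trans (leq0n _) (common_in_arcs axy).
  by rewrite inE => /andP [ux _]; exists u.
have := oriented_indegree_lt (m := e.+1) arc_asym in_x.
have -> : #|[set v | arc x v]| = #|[set v | g x v & repeated g c x v]| by [].
have := card_repeated g c x; rewrite -/e => out_le in_gt.
suff : e.+1.*2 < #|[set u | arc u x]| by lia.
apply: in_gt => z; rewrite inE => azx.
have -> : [set u in [set u | arc u x] | arc u z] = [set u | arc u z] :&: [set u | arc u x].
  by apply/setP => u; rewrite !inE andbC.
exact: common_in_arcs.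
Qed.

Lemma no_arc x y : ~~ arc x y.
Proof.
have out_le_in v : #|[set w | arc v w]| <= #|[set u | arc u v]|.
  have [->|[w]] := set_0Vmem [set w | arc v w]; first by rewrite cards0.
  by rewrite inE => /card_out_lt_in /ltnW.
by apply/negP => /card_out_lt_in; rewrite (out_le_in_eq out_le_in) ltnn.
Qed.

Lemma no_rainbow_triangle_card0 : #|V| = 0.
Proof.
apply/eqP; rewrite -leqn0 leqNgt; apply/negP => /card_gt0P [v _].
have /card_gt0P [y] : 0 < #|nbhd g v|.
  by have := dense v; have := color_degree_le_card_nbhd g c v; lia.
rewrite inE => gvy.
have /card_gt0P [w] : 0 < #|nbhd g v :&: nbhd g y|.
  have := dense v; have := color_degree_le_card_nbhd g c v.
  have := dense y; have := color_degree_le_card_nbhd g c y.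
  have := leq_cards_addI (nbhd g v) (nbhd g y); lia.
rewrite !inE => /andP [gvw gyw]; have gwv : g w v by rewrite gsym.
have arc_same_color a b b' : g a b -> g a b' -> g b b' -> c a b = c a b' -> arc a b.
  by move=> gab gab' gbb' cab; rewrite /arc gab (repeated_same_color gab gab') ?(edge_neq girr).
case: (non_rainbow_corner gvy gyw gwv) => [cvy | cyw | cwv].
- by have := no_arc v y; rewrite (arc_same_color _ _ w gvy).
- by have := no_arc y w; rewrite (arc_same_color _ _ v gyw) // gsym.
- by have := no_arc w v; rewrite (arc_same_color _ _ y gwv) // gsym.
Qed.

End NoRainbowTriangle.

Lemma rainbow_triangle_one_sided : 0 < #|V| -> exists x y z, rainbow_triangle g c x y z.
Proof.
move=> V_gt0; case: (boolP [exists x, exists y, exists z, rainbow_triangle g c x y z]).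
  by case/existsP=> x /existsP [y /existsP [z xyz]]; exists x, y, z.
move/existsPn=> none; suff V_eq0 : #|V| = 0 by rewrite V_eq0 in V_gt0.
apply: no_rainbow_triangle_card0 => x y z.
by have /existsPn/(_ y)/existsPn/(_ z) := none x.
Qed.

End OneSidedRepetition.

Lemma color_degree_sub (T : finType) (g g' : rel T) (c : T -> T -> nat) v :
  (forall u, g' v u -> g v u) ->
  (forall u, g v u -> exists2 u', g' v u' & c v u' = c v u) ->
  color_degree g' c v = color_degree g c v.
Proof.
move=> sub same; rewrite !color_degreeE; apply/perm_size/uniq_perm; rewrite ?undup_uniq // => a.
rewrite !mem_undup; apply/mapP/mapP => -[u]; rewrite mem_filter mem_enum andbT => guv ->.
  by exists u; rewrite // mem_filter mem_enum andbT sub.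
by have [u' g'vu' <-] := same u guv; exists u'; rewrite // mem_filter mem_enum andbT.
Qed.

Definition delete_edge (T : finType) (g : rel T) x y : rel T :=
  fun u v => g u v && ~~ ((u \in [set x; y]) && (v \in [set x; y])).

Section DeleteEdge.
Variables (T : finType) (g : rel T) (c : T -> T -> nat) (x y : T).
Hypotheses (girr : irreflexive g) (gxy : g x y).
Hypotheses (rxy : repeated g c x y) (ryx : repeated g c y x).

Lemma delete_edge_sym : symmetric g -> symmetric (delete_edge g x y).
Proof. by move=> gsym u v; rewrite /delete_edge gsym [(u \in _) && _]andbC. Qed.

Lemma delete_edge_irr : irreflexive (delete_edge g x y).
Proof. by move=> u; rewrite /delete_edge girr. Qed.

Lemma card_delete_edge :
  #|[set p : T * T | delete_edge g x y p.1 p.2]| < #|[set p : T * T | g p.1 p.2]|.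
Proof.
apply/proper_card/properP; split.
  by apply/subsetP => p; rewrite !inE => /andP [].
by exists (x, y); rewrite !inE /delete_edge gxy ?set21 ?set22.
Qed.

Lemma color_degree_delete_edge v : color_degree (delete_edge g x y) c v = color_degree g c v.
Proof.
apply: color_degree_sub => [u /andP [] //|u gvu].
case E: ((v \in [set x; y]) && (u \in [set x; y])).
  2: by exists u => //; apply/andP; split; last exact: negbT E.
have escape a b : g a b -> repeated g c a b -> [set a; b] = [set x; y] ->
    exists2 u', delete_edge g x y a u' & c a u' = c a b.
  move=> gab /(repeatedP c gab) [u' [gau' u'b cau']] Eab; exists u' => //.
  have u'a : u' != a by rewrite eq_sym (edge_neq girr gau').
  by rewrite /delete_edge /= -Eab gau' !inE (negbTE u'a) (negbTE u'b) andbF.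
move: E gvu; rewrite !inE => /andP [/orP [] /eqP -> /orP [] /eqP ->]; rewrite ?girr //.
- by move=> _; apply: escape.
- by move=> gyx; apply: escape => //; apply/setP => w; rewrite !inE orbC.
Qed.

End DeleteEdge.

Theorem rainbow_triangle_exists (V : finType) (g : rel V) (c : V -> V -> nat) :
  (forall x y, c x y = c y x) -> symmetric g -> irreflexive g -> 0 < #|V| ->
  (forall v, #|V| < 2 * color_degree g c v) -> exists x y z, rainbow_triangle g c x y z.
Proof.
move=> csym; have [n] := ubnP #|[set p : V * V | g p.1 p.2]|.
elim: n g => // n IH g edges_lt gsym girr V_gt0 dense.
case: (boolP [exists x, exists y, [&& g x y, repeated g c x y & repeated g c y x]]); last first.
  move/existsPn=> one_sided; apply: rainbow_triangle_one_sided => // x y gxy rxy.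
  by have /existsPn/(_ y) := one_sided x; rewrite gxy rxy.
case/existsP=> x /existsP [y /and3P [gxy rxy ryx]].
have [a [b [d]]] : exists a b d, rainbow_triangle (delete_edge g x y) c a b d.
  apply: IH => //.
  - by rewrite -ltnS; exact: leq_ltn_trans (card_delete_edge gxy) edges_lt.
  - exact: delete_edge_sym.
  - exact: delete_edge_irr.
  - by move=> v; rewrite color_degree_delete_edge.
case/and4P=> /andP [gab _] /andP [gbd _] /andP [gda _] cabd.
by exists a, b, d; apply/and4P.
Qed.

Lemma color_degree_induced (T : finType) (e : rel T) (c : T -> T -> nat) (U : {set T})
    (v : {x | x \in U}) :
  color_degree e c (val v) <=
  color_degree (fun u w : {x | x \in U} => e (val u) (val w))
               (fun u w => c (val u) (val w)) v + #|~: U|.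
Proof.
rewrite !color_degreeE.
set colsU := colors (fun u w : {x | x \in U} => e (val u) (val w)) _ v.
have sub : {subset undup (colors e c (val v)) <=
            undup colsU ++ [seq c (val v) u | u <- enum (~: U)]}.
  move=> a; rewrite mem_cat !mem_undup => /mapP [u]; rewrite mem_filter mem_enum andbT.
  move=> evu ->; case: (boolP (u \in U)) => uU.
    by apply/orP; left; apply/mapP; exists (Sub u uU); rewrite // mem_filter mem_enum andbT.
  by apply/orP; right; apply: map_f; rewrite mem_enum inE.
by have := uniq_leq_size (undup_uniq _) sub; rewrite size_cat size_map -cardE.
Qed.

Lemma rainbow_triangle_avoiding (T : finType) (e : rel T) (c : T -> T -> nat) (W : {set T}) :
  simple_graph e -> edge_coloring c -> 0 < #|T| ->
  (forall v, #|T| + #|W| < 2 * color_degree e c v) ->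
  exists x y z, [/\ x \notin W, y \notin W, z \notin W & rainbow_triangle e c x y z].
Proof.
move=> [esym eirr] csym /card_gt0P [v0 _] dense.
have card_U : #|{: {x | x \in ~: W}}| = #|T| - #|W|.
  by rewrite card_sig -(cardsC W) addKn.
have W_lt : #|W| < #|T|.
  by have := dense v0; have := color_degree_le_card_nbhd e c v0; have := max_card (nbhd e v0); lia.
have [a [b [d xyz]]] : exists a b d : {x | x \in ~: W},
    rainbow_triangle (fun u w => e (val u) (val w)) (fun u w => c (val u) (val w)) a b d.
  apply: rainbow_triangle_exists => [u w | u w | u | | v].
  - exact: csym.
  - exact: esym.
  - exact: eirr.
  - by rewrite card_U subn_gt0.
  - have : #|T| - #|W| < 2 * (color_degree e c (val v) - #|W|).
      by have := dense (val v); lia.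
    rewrite card_U => /leq_trans; apply; rewrite leq_mul2l leq_subLR addnC; apply/orP; right.
    by have := color_degree_induced e c v; rewrite setCK.
by exists (val a), (val b), (val d); split; rewrite // -in_setC; apply: valP.
Qed.

Lemma rainbow_triangle_cycle (T : finType) (e : rel T) (c : T -> T -> nat) x y z :
  irreflexive e -> rainbow_triangle e c x y z -> rainbow_cycle e c [:: x; y; z].
Proof.
move=> eirr /and4P [exy eyz ezx col].
rewrite /rainbow_cycle /is_graph_cycle /cycle_colors /= exy eyz ezx; move: col => /= ->.
by rewrite !inE negb_or (edge_neq eirr exy) (edge_neq eirr eyz) (eq_sym x z) (edge_neq eirr ezx).
Qed.

Lemma disjoint_rainbow_triangles (T : finType) (e : rel T) (c : T -> T -> nat) k :
  simple_graph e -> edge_coloring c -> 0 < #|T| ->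
  (forall v, #|T| + 3 * k <= 2 * color_degree e c v) ->
  exists cs : seq (seq T),
    [/\ size cs = k, {in cs, forall s, rainbow_cycle e c s} & uniq (flatten cs)].
Proof.
move=> ge ce T_gt0.
suff: (forall v, #|T| + 3 * k <= 2 * color_degree e c v) ->
  exists cs : seq (seq T), [/\ size cs = k, size (flatten cs) = 3 * k,
    {in cs, forall s, rainbow_cycle e c s} & uniq (flatten cs)].
  by move=> strong /strong [cs [? _ ? ?]]; exists cs.
elim: k => [|k IH] dense; first by exists [::].
have /IH [cs [size_cs size_flat rb uniq_cs]] : forall v, #|T| + 3 * k <= 2 * color_degree e c v.
  by move=> v; have := dense v; lia.
set W := [set x in flatten cs].
have card_W : #|W| <= 3 * k by rewrite cardsE -size_flat card_size.
have [x [y [z [xW yW zW xyz]]]] : exists x y z,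
    [/\ x \notin W, y \notin W, z \notin W & rainbow_triangle e c x y z].
  by apply: rainbow_triangle_avoiding => // v; have := dense v; lia.
have /andP [/and3P [_ uniq_xyz _] _] := rainbow_triangle_cycle ge.2 xyz.
exists ([:: x; y; z] :: cs); split.
- by rewrite /= size_cs.
- by rewrite /= size_flat mulnS.
- by move=> s; rewrite inE => /predU1P [->|/rb //]; apply: rainbow_triangle_cycle ge.2 xyz.
- have -> : flatten ([:: x; y; z] :: cs) = [:: x; y; z] ++ flatten cs by [].
  rewrite cat_uniq uniq_xyz uniq_cs andbT /=; apply/hasPn => u u_cs.
  have uW : u \in W by rewrite inE.
  apply/negP; rewrite !inE => /or3P [] /eqP eu.
  + by move: xW; rewrite -eu uW.
  + by move: yW; rewrite -eu uW.
  + by move: zW; rewrite -eu uW.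
Qed.

Lemma uniq_flatten_disjoint (T : finType) (ss : seq (seq T)) i j :
  uniq (flatten ss) -> i != j -> [disjoint nth [::] ss i & nth [::] ss j].
Proof.
elim: ss i j => [|s ss IH] i j; first by rewrite !nth_nil disjoint0.
rewrite /= cat_uniq => /and3P [_ s_ss uniq_ss].
have sub k : nth [::] ss k \subset flatten ss.
  apply/subsetP => u u_k; case: (ltnP k (size ss)) => [k_lt|k_ge].
    by apply/flattenP; exists (nth [::] ss k); rewrite ?mem_nth.
  by rewrite nth_default in u_k.
have disj : [disjoint s & flatten ss] by rewrite disjoint_sym disjoint_has.
case: i j => [|i] [|j] //= ij.
- exact: disjointWr (sub j) disj.
- by rewrite disjoint_sym; apply: disjointWr (sub i) disj.
- exact: IH.
Qed.

Theorem corollary1 (k : nat) (T : finType) (e : rel T) (c : T -> T -> nat) :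
  0 < k ->
  simple_graph e ->
  edge_coloring c ->
  0 < #|T| ->
  (* delta^c(G) >= n/2 + 64k + 1, cleared of the fraction *)
  (forall v : T, #|T| + 128 * k + 2 <= 2 * color_degree e c v) ->
  exists C : 'I_k -> seq T,
    (forall i, rainbow_cycle e c (C i)) /\
    (forall i j, i != j -> [disjoint C i & C j]).
Proof.
move=> _ ge ce T_gt0 dense.
have [cs [size_cs rb uniq_cs]] : exists cs : seq (seq T),
    [/\ size cs = k, {in cs, forall s, rainbow_cycle e c s} & uniq (flatten cs)].
  by apply: disjoint_rainbow_triangles => // v; have := dense v; lia.
exists (nth [::] cs); split => [i | i j ij].
  by apply: rb; rewrite mem_nth // size_cs.
exact: uniq_flatten_disjoint.
Qed.
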